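(* Consider an exponential bottleneck game on a graph $G$, a Nash-routing $\mathbf{p}=[p_1,\dots,p_N]$ and a routing $\mathbf{p}^*=[p_1^*,\dots,p_N^*]$ of minimum social cost $C^*=C(\mathbf{p}^* )=M$, and suppose $L^*\ge2$. Let $\hat C=\lceil\max_i\log_2\widetilde C_i(\mathbf{p})\rceil$ and $l_1^*=\log_2(L^*-1)$. If $k$ is a positive integer with $\hat C-k>8M+l_1^*+2$, then every non-empty set of players $S\subseteq S^{(1)}\cup S^{(2)}\cup\dots\cup S^{(k)}$ is not self-sufficient in $\mathbf{p}$.
   Context: Player $\pi_i$ has a strategy set $\mathcal{P}_i$ of paths from $u_i$ to $v_i$; a routing is $\mathbf{p}=[p_1,\dots,p_N]$ with $p_i\in\mathcal{P}_i$. $C_e(\mathbf{p})$ is the number of paths in $\mathbf{p}$ using edge $e$; social cost $C(\mathbf{p})=\max_eC_e(\mathbf{p})$; player cost $\widetilde C_i(\mathbf{p})=\sum_{e\in p_i}2^{C_e(\mathbf{p})}$. A Nash-routing is one in which no player can strictly lower its cost by unilaterally switching to another path in its strategy set. $L^*$ is the maximum length of a path in $\mathbf{p}^*$. Stage $i$ ($1\le i\le\hat C$): $S^{(i)}$ is the set of players $\pi_j$ with $2^{\hat C-i}+2\le\widetilde C_j(\mathbf{p})\le 2^{\hat C-i+1}$. Self-sufficiency: for a set $S$ of players and $\pi_j\in S$, let $\mathbf{q}_j$ be the routing consisting only of the players in $S$, where every player of $S$ other than $\pi_j$ uses its path from $\mathbf{p}$ and $\pi_j$ uses $p_j^*$ (congestions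 in $\mathbf{q}_j$ count only these paths). $S$ is self-sufficient in $\mathbf{p}$ if for every $\pi_j\in S$, $\sum_{e\in p_j^*}2^{C_e(\mathbf{q}_j)}\ge\widetilde C_j(\mathbf{p})$. *)

From mathcomp Require Import all_boot.
From Stdlib Require Import Reals.

Set Implicit Arguments.
Unset Strict Implicit.
Unset Printing Implicit Defensive.

Fixpoint is_walk (V E : Type) (src tgt : E -> V) (u w : V) (s : seq E) : Prop :=
  match s with
  | [::] => u = w
  | e :: s' => src e = u /\ is_walk src tgt (tgt e) w s'
  end.

Definition is_path (V : eqType) (E : Type) (src tgt : E -> V) (u w : V)
  (s : seq E) : Prop :=
  is_walk src tgt u w s /\ uniq (u :: map tgt s).

Definition cong (E : finType) (N : nat) (r : 'I_N -> seq E) (e : E) : nat :=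
  #|[pred i : 'I_N | e \in r i]|.

Definition cong_in (E : finType) (N : nat) (S : {set 'I_N})
  (r : 'I_N -> seq E) (e : E) : nat :=
  #|[pred i : 'I_N | (i \in S) && (e \in r i)]|.

Definition social_cost (E : finType) (N : nat) (r : 'I_N -> seq E) : nat :=
  \max_(e : E) cong r e.

Definition pcost (E : finType) (N : nat) (r : 'I_N -> seq E) (i : 'I_N) : nat :=
  \sum_(e <- r i) 2 ^ cong r e.

Definition update (E : Type) (N : nat) (r : 'I_N -> seq E) (i : 'I_N)
  (q : seq E) : 'I_N -> seq E :=
  fun j => if j == i then q else r j.

Definition is_routing (E : Type) (N : nat) (Pset : 'I_N -> seq E -> Prop)
  (r : 'I_N -> seq E) : Prop :=
  forall i, Pset i (r i).

Definition is_nash (E : finType) (N : nat) (Pset : 'I_N -> seq E -> Prop)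
  (r : 'I_N -> seq E) : Prop :=
  is_routing Pset r /\
  forall i q, Pset i q -> pcost r i <= pcost (update r i q) i.

Definition is_optimal (E : finType) (N : nat) (Pset : 'I_N -> seq E -> Prop)
  (r : 'I_N -> seq E) : Prop :=
  is_routing Pset r /\
  forall r', is_routing Pset r' -> social_cost r <= social_cost r'.

Definition max_len (E : Type) (N : nat) (r : 'I_N -> seq E) : nat :=
  \max_(i < N) size (r i).

Definition self_sufficient (E : finType) (N : nat) (S : {set 'I_N})
  (p pstar : 'I_N -> seq E) : Prop :=
  forall j, j \in S ->
    pcost p j <= \sum_(e <- pstar j) 2 ^ cong_in S (update p j (pstar j)) e.

Definition log2 (x : R) : R := (ln x / ln 2)%R.

(* ceiling: - floor (- x);  Int_part is the floor *)
Definition Rceil (x : R) : Z := (- Int_part (- x))%Z.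

(* hat C = ceil (max_i log2 ~C_i(p)).  All log2 of costs are >= 0 (costs are
   naturals), so folding Rmax from 0 gives the maximum when N >= 1. *)
Definition hatC (E : finType) (N : nat) (p : 'I_N -> seq E) : Z :=
  Rceil (\big[Rmax/0%R]_(i < N) log2 (INR (pcost p i))).

Definition in_stage (E : finType) (N : nat) (p : 'I_N -> seq E) (i : nat)
  (j : 'I_N) : Prop :=
  (1 <= i)%N /\ (Z.of_nat i <= hatC p)%Z /\
  (powerRZ 2 (hatC p - Z.of_nat i) + 2 <= INR (pcost p j))%R /\
  (INR (pcost p j) <= powerRZ 2 (hatC p - Z.of_nat i + 1))%R.

(* Suppose S were self-sufficient and put c(e) := C_e restricted to S in p.
   Moving one player onto p*_j raises c(e) by at most 1, so each p*_j-edge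
   costs at most 2^(c(e)+1) <= 2^(4M) when c(e) < 4M.  Summing the heavy
   edges (c(e) >= 4M) over j in S counts each at most M times (p* has
   congestion M), which is at most c(e)/4 times, so they account for at most
   half of the total cost of S in p.  Hence the players of S pay on average at
   most 2^(4M+1) L*, whereas belonging to the first k stages forces each of
   them to pay at least 2^(hat C - k) > 2^(8M+2) (L* - 1). *)
From mathcomp Require Import all_boot zify.
From Stdlib Require Import Reals Lra.
(* Importing Reals rebinds [m ^ n] on nat to [Nat.pow]; restore [expn]. *)
Import ssrnat.

Set Implicit Arguments.
Unset Strict Implicit.
Unset Printing Implicit Defensive.

Lemma natpowE m n : Nat.pow m n = m ^ n.
Proof. by elim: n => //= n ->; rewrite expnS. Qed.

Lemma sum_nat_const_seq (T : Type) (s : seq T) (c : nat) :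
  \sum_(x <- s) c = size s * c.
Proof. by rewrite big_const_seq count_predT iter_addn_0 mulnC. Qed.

Section SelfSufficientCost.

Variables (E : finType) (N : nat) (S : {set 'I_N}).

Lemma cong_in_le_cong (r : 'I_N -> seq E) e : cong_in S r e <= cong r e.
Proof. by apply: subset_leq_card; apply/subsetP => i; rewrite !inE => /andP[]. Qed.

Lemma cong_in_update (r : 'I_N -> seq E) j q e :
  cong_in S (update r j q) e <= (cong_in S r e).+1.
Proof.
set A := [pred i : 'I_N | (i \in S) && (e \in r i)].
apply: (@leq_trans #|[predU A & pred1 j]|).
  apply: subset_leq_card; apply/subsetP => i; rewrite !inE /update.
  by case: (i == j); rewrite ?orbT ?orbF.
rewrite -addn1 -(card1 j) -(cardUI A (pred1 j)); exact: leq_addr.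
Qed.

Lemma sum_cong_in (r : 'I_N -> seq E) (h : E -> nat) :
  (forall j, j \in S -> uniq (r j)) ->
  \sum_(j in S) \sum_(e <- r j) h e = \sum_e cong_in S r e * h e.
Proof.
move=> r_uniq; transitivity (\sum_(j in S) \sum_(e in r j) h e).
  by apply: eq_bigr => j jS; rewrite big_uniq ?r_uniq.
rewrite (exchange_big_dep xpredT) //=; apply: eq_bigr => e _.
by rewrite -sum_nat_const; apply: eq_bigl => i.
Qed.

Variables (p ps : 'I_N -> seq E) (M L : nat).
Hypotheses (p_uniq : forall j, uniq (p j)) (ps_uniq : forall j, uniq (ps j)).
Hypothesis ps_size : forall j, size (ps j) <= L.
Hypothesis ps_cong : forall e, cong_in S ps e <= M.

Let c e := cong_in S p e.

Definition heavy_cost e := if 4 * M <= c e then 2 ^ (c e).+1 else 0.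

Lemma pcostE j : pcost p j = \sum_(e <- p j) 2 ^ cong p e.
Proof. by apply: eq_bigr => e _; rewrite natpowE. Qed.

Lemma self_sufficient_pcost_le j : self_sufficient S p ps -> j \in S ->
  pcost p j <= 2 ^ (4 * M) * L + \sum_(e <- ps j) heavy_cost e.
Proof.
move=> Sss jS; apply: leq_trans (Sss j jS) _.
apply: (@leq_trans (\sum_(e <- ps j) (2 ^ (4 * M) + heavy_cost e))).
  apply: leq_sum => e _; rewrite natpowE.
  apply: (@leq_trans (2 ^ (c e).+1)); first by rewrite leq_exp2l ?cong_in_update.
  rewrite /heavy_cost; case: (leqP (4 * M) (c e)) => [_|light]; first exact: leq_addl.
  by rewrite addn0 leq_exp2l.
by rewrite big_split /= sum_nat_const_seq leq_add2r mulnC leq_mul2l ps_size orbT.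
Qed.

Lemma heavy_cost_le_half_sum :
  2 * \sum_e cong_in S ps e * heavy_cost e <= \sum_(j in S) pcost p j.
Proof.
apply: (@leq_trans (\sum_e c e * 2 ^ c e)).
  rewrite big_distrr /=; apply: leq_sum => e _.
  rewrite /heavy_cost; case: (leqP (4 * M) (c e)) => [heavy|]; last by rewrite muln0.
  rewrite expnS; have := ps_cong e.
  move: (2 ^ c e) => x; nia.
rewrite -sum_cong_in //; apply: leq_sum => j _.
by rewrite pcostE; apply: leq_sum => e _; rewrite leq_exp2l ?cong_in_le_cong.
Qed.

Lemma self_sufficient_sum_pcost_le : self_sufficient S p ps ->
  \sum_(j in S) pcost p j <= #|S| * (2 ^ (4 * M) * L) * 2.
Proof.
move=> Sss; have := heavy_cost_le_half_sum.
have : \sum_(j in S) pcost p j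
       <= #|S| * (2 ^ (4 * M) * L) + \sum_e cong_in S ps e * heavy_cost e.
  rewrite -sum_cong_in // -sum_nat_const -big_split /=.
  by apply: leq_sum => j; apply: self_sufficient_pcost_le.
lia.
Qed.

End SelfSufficientCost.

Lemma ln2_gt0 : (0 < ln 2)%R.
Proof. by rewrite -ln_1; apply: ln_increasing; lra. Qed.

Lemma log2_ge0 x : (1 <= x)%R -> (0 <= log2 x)%R.
Proof.
move=> x_ge1; apply: Rmult_le_pos; last exact/Rlt_le/Rinv_0_lt_compat/ln2_gt0.
have [x_gt1|<-] := Rle_lt_or_eq_dec _ _ x_ge1; last by rewrite ln_1; lra.
by rewrite -ln_1; apply/Rlt_le/ln_increasing; lra.
Qed.

Lemma INR_expn2 n : INR (2 ^ n) = (2 ^ n)%R.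
Proof. by rewrite -natpowE pow_INR. Qed.

Lemma gap_exp2_lt (z : Z) (M A : nat) : 0 < A ->
  (IZR z > 8 * INR M + log2 (INR A) + 2)%R ->
  exists d, z = Z.of_nat d /\ 2 ^ (8 * M + 2) * A < 2 ^ d.
Proof.
move=> A_gt0 gap.
have A_ge1 : (1 <= INR A)%R by apply: (le_INR 1); apply/leP.
have z_ge0 : (0 <= z)%Z.
  by apply: le_IZR; have := log2_ge0 A_ge1; have := pos_INR M; lra.
have [d zE] : exists d, z = Z.of_nat d by exists (Z.to_nat z); lia.
subst z; exists d; split => //; rewrite -INR_IZR_INZ in gap.
apply/ltP; apply: INR_lt; rewrite mult_INR !INR_expn2 -!Rpower_pow; try lra.
rewrite -{1}(exp_ln (INR A)); last lra.
rewrite /Rpower -exp_plus; apply: exp_increasing.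
have ln2 := ln2_gt0.
have log2K : (log2 (INR A) * ln 2 = ln (INR A))%R by rewrite /log2; field; lra.
have := Rmult_lt_compat_r (ln 2) _ _ ln2 gap.
rewrite !Rmult_plus_distr_r log2K plus_INR mult_INR.
replace (INR 8) with 8%R by (simpl; lra); replace (INR 2) with 2%R by (simpl; lra).
lra.
Qed.

Lemma in_stage_pcost_ge (E : finType) (N : nat) (p : 'I_N -> seq E) i k d j :
  i <= k -> (hatC p - Z.of_nat k)%Z = Z.of_nat d -> in_stage p i j ->
  2 ^ d <= pcost p j.
Proof.
move=> le_ik hatCk [_ [_ [stage_lb _]]].
have iE : (hatC p - Z.of_nat i)%Z = Z.of_nat (d + (k - i)) by lia.
rewrite iE -pow_powerRZ in stage_lb.
apply: (@leq_trans (2 ^ (d + (k - i)))); first by rewrite leq_exp2l // leq_addr.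
by apply/leP; apply: INR_le; rewrite INR_expn2; lra.
Qed.

Lemma exp2_bound_le M L : 2 <= L -> 2 ^ (4 * M) * L * 2 <= 2 ^ (8 * M + 2) * (L - 1).
Proof.
move=> L_ge2; have : 1 <= 2 ^ (4 * M) by rewrite expn_gt0.
have -> : 2 ^ (8 * M + 2) = 2 ^ (4 * M) * 2 ^ (4 * M) * 4.
  by rewrite -expnD -(expnD 2 _ 2) addnn -mul2n mulnA.
move: (2 ^ (4 * M)) => x; nia.
Qed.

Theorem lemma5 (V E : finType) (src tgt : E -> V) (N : nat)
  (u w : 'I_N -> V) (Pset : 'I_N -> seq E -> Prop)
  (HP : forall i q, Pset i q -> is_path src tgt (u i) (w i) q)
  (p pstar : 'I_N -> seq E)
  (Hnash : is_nash Pset p) (Hopt : is_optimal Pset pstar)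
  (M : nat) (HM : M = social_cost pstar)
  (HL : (2 <= max_len pstar)%N)
  (k : nat) (Hk : (0 < k)%N)
  (Hgap : (IZR (hatC p - Z.of_nat k) >
           8 * INR M + log2 (INR (max_len pstar - 1)) + 2)%R)
  (S : {set 'I_N}) (HS0 : S != set0)
  (HS : forall j, j \in S -> exists i, (1 <= i <= k)%N /\ in_stage p i j) :
  ~ self_sufficient S p pstar.
Proof.
move=> Sss; set L := max_len pstar in HL Hgap.
have path_uniq i q : Pset i q -> uniq q by move/HP=> [_ /andP[_ /map_uniq]].
have [[p_routing _] [ps_routing _]] := (Hnash, Hopt).
have ps_cong e : cong_in S pstar e <= M.
  by rewrite HM; apply: leq_trans (cong_in_le_cong _ _ _) (leq_bigmax e).
have ps_size j : size (pstar j) <= L by apply: (leq_bigmax j).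
have [d [hatCk gap]] := gap_exp2_lt (ltac:(lia) : 0 < L - 1) Hgap.
have S_lb : #|S| * 2 ^ d <= \sum_(j in S) pcost p j.
  rewrite -sum_nat_const; apply: leq_sum => j /HS[i [/andP[_ le_ik] stage]].
  exact: in_stage_pcost_ge le_ik hatCk stage.
have := leq_trans S_lb (self_sufficient_sum_pcost_le
  (fun j => path_uniq _ _ (p_routing j)) (fun j => path_uniq _ _ (ps_routing j))
  ps_size ps_cong Sss).
rewrite -!mulnA leq_pmul2l ?card_gt0 // mulnA => ub.
by have := leq_ltn_trans (leq_trans ub (exp2_bound_le M HL)) gap; rewrite ltnn.
Qed.
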